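(* For every integer $m\ge2$, $\mathrm{disc}(4m+2,4)=2$.
   Context: For positive integers $n>k$, let $S_n$ be the set of permutations $\pi=(\pi_1,\dots,\pi_n)$ of $1,\dots,n$, with cyclic indexing $\pi_{n+i}=\pi_i$, and $s_i=\sum_{j=0}^{k-1}\pi_{i+j}$ for $i=1,\dots,n$. Define $\mathrm{disc}(\pi,k)=\max_{1\le i\le n}|s_i-\frac{k(n+1)}{2}|$ and $\mathrm{disc}(n,k)=\min_{\pi\in S_n}\mathrm{disc}(\pi,k)$. *)

From HB Require Import structures.
From mathcomp Require Import all_boot all_order all_algebra.
From mathcomp Require Import fingroup perm.
Set Implicit Arguments. Unset Strict Implicit. Unset Printing Implicit Defensive.
Import Order.TTheory GRing.Theory Num.Theory.
Local Open Scope ring_scope.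

Lemma cyc_proof n (i : 'I_n) (j : nat) : ((i + j) %% n < n)%N.
Proof. by apply: ltn_pmod; apply: leq_ltn_trans (leq0n i) (ltn_ord i). Qed.

Definition cyc n (i : 'I_n) (j : nat) : 'I_n := Ordinal (cyc_proof i j).

(* A permutation pi of 1..n is encoded by s : 'S_n via pi_(i+1) = s i + 1
   (positions and values shifted by one). *)
Definition pival n (s : 'S_n) (i : 'I_n) : nat := (s i).+1.

Definition window_sum n (k : nat) (s : 'S_n) (i : 'I_n) : nat :=
  \sum_(j < k) pival s (cyc i j).

Definition disc_perm n (k : nat) (s : 'S_n) : rat :=
  \big[Num.max/0]_(i < n)
     `| (window_sum k s i)%:R - (k * n.+1)%:R / 2%:R |.

Definition disc (n k : nat) : rat :=
  disc_perm k (Order.arg_min (1%g : 'S_n) xpredT (disc_perm k)).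

From mathcomp Require Import all_boot all_order all_algebra.
From mathcomp Require Import fingroup perm zify.
Import Order.TTheory GRing.Theory Num.Theory.

Set Implicit Arguments.
Unset Strict Implicit.
Unset Printing Implicit Defensive.

(* If every 4-window sum of a cyclic arrangement pi of 1..4m+2 were within 1
   of the mean 8m+6, comparing consecutive windows would give
   |pi_(t+4) - pi_t| <= 2.  As 4 has order 2m+1 modulo 4m+2, the values
   pi_p, pi_(p+4), pi_(p+8), ... read from the position p of the maximum M
   form a cycle of 2m+1 distinct numbers with steps of size at most 2; such a
   cycle must run M, M-2, M-4, ... in one direction and M-1, M-3, ... in the
   other.  Either way this yields a step of -2 at some t and a step of +2 at
   t+2, which puts the windows at t+1 and t+2 both at the bottom of the band,
   so pi_(t+5) = pi_(t+1).  Conversely, for L = 2m+1, interleaving the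
   arrangement 0, L-2, 2, L-4, ..., L-1 of 0..L-1 with its translate by L
   keeps all window sums within 2 of the mean, because the cyclically
   consecutive sums of that arrangement lie in [L-2, L]. *)

Definition window_sumn (f : nat -> nat) (k t : nat) : nat := \sum_(j < k) f (t + j).

Lemma window_sumnS f k t : window_sumn f k t.+1 + f t = window_sumn f k t + f (t + k).
Proof.
rewrite /window_sumn; case: k => [|k]; first by rewrite !big_ord0 addn0.
rewrite big_ord_recr big_ord_recl /= addn0 addSnnS.
under [X in _ = _ + X + _]eq_bigr do rewrite -addSnnS.
by rewrite addnC addnA.
Qed.

Section Band.
Variables (f : nat -> nat) (k c : nat).
Hypothesis band : forall t, c <= window_sumn f k t <= c + 2.

Lemma window_band_step t : f (t + k) <= f t + 2 /\ f t <= f (t + k) + 2.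
Proof. by have := window_sumnS f k t; have := band t; have := band t.+1; lia. Qed.

Lemma window_band_dip_rise t :
  f (t + k) + 2 = f t -> f (t.+2 + k) = f t.+2 + 2 -> f (t.+1 + k) = f t.+1.
Proof.
have := window_sumnS f k t; have := window_sumnS f k t.+1; have := window_sumnS f k t.+2.
by have := band t; have := band t.+1; have := band t.+2; have := band t.+3; lia.
Qed.

End Band.

Lemma zigzag_rays (m M : nat) (a b : nat -> nat) :
  a 0 = M -> b 0 = M ->
  (forall k, k <= m -> a k <= M) -> (forall k, k <= m -> b k <= M) ->
  (forall k, k < m -> a k.+1 <= a k + 2 /\ a k <= a k.+1 + 2) ->
  (forall k, k < m -> b k.+1 <= b k + 2 /\ b k <= b k.+1 + 2) ->
  {in [pred k | k <= m] &, injective a} -> {in [pred k | k <= m] &, injective b} ->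
  (forall i j, 0 < i <= m -> 0 < j <= m -> a i <> b j) ->
  a 1 < b 1 -> forall k, 0 < k <= m -> a k + k.*2 = M /\ b k + k.*2 = M.+1.
Proof.
move=> a0 b0 a_le b_le da db inj_a inj_b a_b lt_ab.
have ne_a i j : i <= m -> j <= m -> i != j -> a i != a j.
  by move=> im jm; apply: contra_neq; apply: inj_a.
have ne_b i j : i <= m -> j <= m -> i != j -> b i != b j.
  by move=> im jm; apply: contra_neq; apply: inj_b.
suff zig k : k <= m -> forall j, 0 < j <= k -> a j + j.*2 = M /\ b j + j.*2 = M.+1.
  by move=> k /andP[k0 km]; apply: (zig k km); rewrite k0 leqnn.
elim: k => [|k IHk] km j /andP[j0 jk]; first by case: j j0 jk.
case: (ltngtP j k.+1) => [jk'|jk'|->]; [by apply: IHk; lia | lia |].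
have [k0|k_gt0] := posnP k.
  subst k; have /eqP := ne_a 1 0 km isT isT; have /eqP := ne_b 1 0 km isT isT.
  have := a_b 1 1 km km; have := da 0 km; have := db 0 km.
  by have := a_le 1 km; have := b_le 1 km; lia.
have [ak bk] := IHk (ltnW km) k ltac:(lia).
have a_prev : a k.-1 + k.*2 = M.+2.
  case: (ltngtP k 1) => [|k_gt1|->]; [lia| |by rewrite a0; lia].
  by have := IHk (ltnW km) k.-1; lia.
have b_avoid : b k.+1 + k.*2 <> M.+3 /\ b k.+1 <> a k.-1.
  case: (ltngtP k 1) => [|k_gt1|k1]; first lia.
    have [_ bk'] := IHk (ltnW km) k.-1 ltac:(lia).
    have /eqP := ne_b k.+1 k.-1 km ltac:(lia) ltac:(lia).
    by have := a_b k.-1 k.+1 ltac:(lia) ltac:(lia); lia.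
  subst k; have /eqP := ne_b 2 0 km isT isT; rewrite a0 b0.
  by have := b_le 2 km; lia.
(* The values M - 2k, ..., M are taken, so b k.+1, within 2 of b k, must be
   M - 2k - 1; then a k.+1, within 2 of a k, must be M - 2k - 2. *)
have bk1 : b k.+1 + k.+1.*2 = M.+1.
  have /eqP := ne_b k.+1 k km (ltnW km) ltac:(lia).
  by have := a_b k k.+1 ltac:(lia) ltac:(lia); have := db k km; lia.
split=> //.
have /eqP := ne_a k.+1 k km (ltnW km) ltac:(lia).
have /eqP := ne_a k.+1 k.-1 km ltac:(lia) ltac:(lia).
have := a_b k.+1 k ltac:(lia) ltac:(lia); have := a_b k.+1 k.+1 ltac:(lia) ltac:(lia).
by have := da k km; lia.
Qed.

Lemma no_injective_window4_band (m c : nat) (f : nat -> nat) : 2 <= m ->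
  (forall t, f (t + (4 * m + 2)) = f t) ->
  (forall t u, f t = f u -> t = u %[mod 4 * m + 2]) ->
  (forall t, f t <= f 0) ->
  (forall t, c <= window_sumn f 4 t <= c + 2) -> False.
Proof.
move=> m2 f_per f_inj f_top band.
have inj_lt t u : t < 4 * m + 2 -> u < 4 * m + 2 -> f t = f u -> t = u.
  by move=> tN uN /f_inj; rewrite !modn_small.
have step t := window_band_step band t.
(* [a] and [b] run through the cycle f 0, f 4, f 8, ... of length 2m+1 in
   opposite directions. *)
pose a k := f (4 * k); pose b k := f (4 * m + 2 - 4 * k).
have fN : f (4 * m + 2) = f 0 by rewrite -[4 * m + 2]add0n f_per.
have b0 : b 0 = f 0 by rewrite /b muln0 subn0.
have a_le k : k <= m -> a k <= f 0 by move=> _; apply: f_top.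
have b_le k : k <= m -> b k <= f 0 by move=> _; apply: f_top.
have da k : k < m -> a k.+1 <= a k + 2 /\ a k <= a k.+1 + 2.
  by rewrite /a mulnS addnC => _; apply: step.
have db k : k < m -> b k.+1 <= b k + 2 /\ b k <= b k.+1 + 2.
  move=> km; rewrite /b; have -> : 4 * m + 2 - 4 * k = 4 * m + 2 - 4 * k.+1 + 4 by lia.
  by have := step (4 * m + 2 - 4 * k.+1); lia.
have inj_a : {in [pred k | k <= m] &, injective a}.
  by move=> i j; rewrite !inE => im jm /inj_lt; lia.
have inj_b : {in [pred k | k <= m] &, injective b}.
  move=> i j; rewrite !inE.
  by case: i => [|i]; case: j => [|j] // im jm; rewrite ?b0 /b => /inj_lt; lia.
have a_b i j : 0 < i <= m -> 0 < j <= m -> a i <> b j by move=> im jm /inj_lt; lia.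
have b_a i j : 0 < i <= m -> 0 < j <= m -> b i <> a j by move=> im jm /esym; apply: a_b.
have [lt_ab|lt_ba|eq_ab] := ltngtP (a 1) (b 1); last by apply: (a_b 1 1); lia.
- have zig := @zigzag_rays m (f 0) a b erefl b0 a_le b_le da db inj_a inj_b a_b lt_ab.
  have a1 : a 1 + 2 = f 0 by have := zig 1; lia.
  have bm : b m.-1 = b m + 2 by have := zig m; have := zig m.-1; lia.
  have : f (1 + 4) = f 1.
    apply: (window_band_dip_rise (t := 0) band); first exact: a1.
    have -> : f 2 = b m by rewrite /b; congr f; lia.
    have -> : f (2 + 4) = b m.-1 by rewrite /b; congr f; lia.
    exact: bm.
  by have := inj_lt (1 + 4) 1; lia.
- have zig := @zigzag_rays m (f 0) b a b0 erefl b_le a_le db da inj_b inj_a b_a lt_ba.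
  have b1 : b 1 + 2 = f 0 by have := zig 1; lia.
  have am : a m.-1 = a m + 2 by have := zig m; have := zig m.-1; lia.
  have : f ((4 * m - 4).+1 + 4) = f (4 * m - 4).+1.
    apply: (window_band_dip_rise (t := 4 * m - 4) band).
      have -> : f (4 * m - 4 + 4) = a m by rewrite /a; congr f; lia.
      have -> : f (4 * m - 4) = a m.-1 by rewrite /a; congr f; lia.
      exact: esym am.
    have -> : f ((4 * m - 4).+2 + 4) = f 0 by rewrite -fN; congr f; lia.
    have -> : f (4 * m - 4).+2 = b 1 by rewrite /b; congr f; lia.
    exact: esym b1.
  by have := inj_lt ((4 * m - 4).+1 + 4) (4 * m - 4).+1; lia.
Qed.

Definition perm_seq n (s : 'S_n) (p : 'I_n) (t : nat) : nat := pival s (cyc p t).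

Section PermSeq.
Variables (n : nat) (s : 'S_n) (p : 'I_n).

Lemma cycD (i : 'I_n) t j : cyc (cyc i t) j = cyc i (t + j).
Proof. by apply: val_inj; rewrite /= modnDml addnA. Qed.

Lemma window_sum_perm_seq k t : window_sum k s (cyc p t) = window_sumn (perm_seq s p) k t.
Proof. by apply: eq_bigr => j _; rewrite /perm_seq cycD. Qed.

Lemma perm_seq_periodic t : perm_seq s p (t + n) = perm_seq s p t.
Proof. by rewrite /perm_seq; congr pival; apply: val_inj; rewrite /= addnA modnDr. Qed.

Lemma perm_seq_inj t u : perm_seq s p t = perm_seq s p u -> t = u %[mod n].
Proof. by move=> /succn_inj /val_inj /perm_inj /(congr1 val) /eqP; rewrite eqn_modDl => /eqP. Qed.

Lemma perm_seq_le t : perm_seq s p t <= n.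
Proof. exact: ltn_ord. Qed.

Lemma perm_seq0 : perm_seq s p 0 = pival s p.
Proof. by rewrite /perm_seq; congr pival; apply: val_inj; rewrite /= addn0 modn_small. Qed.

End PermSeq.

Definition zigzag (L r : nat) : nat := if odd r then L.-1 - r else r.

Lemma zigzag_lt L r : r < L -> zigzag L r < L.
Proof. by rewrite /zigzag; case: ifP; lia. Qed.

Lemma zigzag_inj L : odd L -> {in gtn L &, injective (zigzag L)}.
Proof. by move=> oL r u; rewrite !inE /zigzag; case: ifP; case: ifP; lia. Qed.

Lemma zigzag_pair L r : odd L ->
  L.-2 <= zigzag L (r %% L) + zigzag L (r.+1 %% L) <= L.
Proof.
move=> oL; rewrite -addn1 -modnDml addn1.
have : r %% L < L by rewrite ltn_pmod //; lia.
move: (r %% L) => u uL; rewrite /zigzag.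
case: (ltngtP u.+1 L) => [uL'|uL'|uL']; last by rewrite uL' modnn /=; case: ifP; lia.
  by rewrite modn_small //; case: ifP; case: ifP; lia.
by lia.
Qed.

Definition interleave (L t : nat) : nat := zigzag L (t./2 %% L) + odd t * L.

Section Interleave.
Variables (L : nat).
Hypothesis oL : odd L.

Lemma interleave_double r : interleave L r.*2 = zigzag L (r %% L).
Proof. by rewrite /interleave doubleK odd_double addn0. Qed.

Lemma interleave_doubleS r : interleave L r.*2.+1 = zigzag L (r %% L) + L.
Proof.
by rewrite /interleave -[r.*2.+1]/(true + r.*2) half_bit_double /= add0n odd_double /= mul1n.
Qed.

Lemma interleave_mod t : interleave L (t %% L.*2) = interleave L t.
Proof.
rewrite {2}(divn_eq t L.*2) -doubleMr /interleave halfD oddD !odd_double doubleK /=.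
by rewrite modnMDl.
Qed.

Lemma interleave_lt t : interleave L t < L.*2.
Proof. have := zigzag_lt (ltn_pmod t./2 (odd_gt0 oL)); rewrite /interleave; lia. Qed.

Lemma interleave_inj : {in gtn L.*2 &, injective (interleave L)}.
Proof.
move=> t u; rewrite !inE => tL uL.
have [tL' uL'] : t./2 < L /\ u./2 < L by lia.
rewrite /interleave !modn_small // => e.
have odd_tu : odd t = odd u.
  move: e; have := zigzag_lt tL'; have := zigzag_lt uL'.
  by case: (odd t); case: (odd u) => /=; lia.
move: e; rewrite odd_tu => /addIn /(zigzag_inj oL); rewrite !inE => /(_ tL' uL').
by move: odd_tu; lia.
Qed.

Lemma interleave_window t : 4 * L - 4 <=
  interleave L t + interleave L t.+1 + interleave L t.+2 + interleave L t.+3 <= 4 * L.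
Proof.
have [r [->|->]] : exists r, t = r.*2 \/ t = r.*2.+1 by exists t./2; lia.
all: rewrite -!doubleS !interleave_double !interleave_doubleS.
all: by have := zigzag_pair r oL; have := zigzag_pair r.+1 oL; lia.
Qed.

End Interleave.

Local Open Scope ring_scope.

Lemma window_dev_le_disc_perm n k (s : 'S_n) i :
  `|(window_sum k s i)%:R - (k * n.+1)%:R / 2%:R| <= disc_perm k s.
Proof. exact: (le_bigmax _ (fun i => `|(window_sum k s i)%:R - _|)). Qed.

Lemma disc_perm_le n k (s : 'S_n) (x : rat) : 0 <= x ->
  (forall i, `|(window_sum k s i)%:R - (k * n.+1)%:R / 2%:R| <= x) -> disc_perm k s <= x.
Proof. by move=> x_ge0 dev_le; apply: bigmax_le. Qed.

Lemma window4_center n : (4 * n.+1)%:R / 2%:R = (2 * n.+1)%:R :> rat.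
Proof. by rewrite (_ : 4 * n.+1 = 2 * n.+1 * 2)%N ?natrM ?mulfK // mulnAC. Qed.

Lemma natr_dist_lt (w c d : nat) :
  (`|w%:R - c%:R| < d%:R :> rat) = (c < w + d)%N && (w < c + d)%N.
Proof. by rewrite ltr_distl ltrBlDr -!natrD !ltr_nat. Qed.

Lemma natr_dist_le (w c d : nat) :
  (`|w%:R - c%:R| <= d%:R :> rat) = (c <= w + d)%N && (w <= c + d)%N.
Proof. by rewrite ler_distl lerBlDr -!natrD !ler_nat. Qed.

Lemma disc_perm_ge2 m (s : 'S_(4 * m + 2)) : (2 <= m)%N -> 2%:R <= disc_perm 4 s.
Proof.
move=> m2; rewrite leNgt; apply/negP => lt2.
have [top top_val] : exists top : 'I_(4 * m + 2), val top = (4 * m + 1)%N.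
  have top_lt : (4 * m + 1 < 4 * m + 2)%N by lia.
  by exists (Ordinal top_lt).
pose p := (s^-1)%g top.
apply: (@no_injective_window4_band m (8 * m + 5) (perm_seq s p) m2).
- exact: perm_seq_periodic.
- exact: perm_seq_inj.
- by move=> t; rewrite perm_seq0 /pival permKV top_val; have := perm_seq_le s p t; lia.
move=> t; rewrite -window_sum_perm_seq.
have := le_lt_trans (window_dev_le_disc_perm 4 s (cyc p t)) lt2.
by rewrite window4_center natr_dist_lt; lia.
Qed.

Lemma exists_disc_perm_le2 n : (n %% 4 = 2)%N -> exists s : 'S_n, disc_perm 4 s <= 2%:R.
Proof.
move=> n4; have oL : odd n./2 by lia.
have nL : n = n./2.*2 by lia.
have lt_n (i : 'I_n) : (interleave n./2 i < n)%N.
  by rewrite [X in (_ < X)%N]nL (interleave_lt oL).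
pose f (i : 'I_n) := Ordinal (lt_n i).
have f_inj : injective f.
  move=> i j /(congr1 val) /= /(interleave_inj oL).
  by rewrite !inE -nL !ltn_ord => /(_ isT isT) /val_inj.
exists (perm f_inj); apply: disc_perm_le => // i.
have val_s j : val (perm f_inj (cyc i j)) = interleave n./2 (i + j).
  by rewrite permE /cyc /= [X in (_ %% X)%N]nL interleave_mod.
rewrite window4_center natr_dist_le /window_sum /pival !big_ord_recr big_ord0 /= !val_s.
by rewrite addn0 addn1 !addn2 addn3; have := interleave_window oL i; lia.
Qed.

Lemma disc_le n k (s : 'S_n) : disc n k <= disc_perm k s.
Proof. by rewrite /disc; case: (arg_minP (disc_perm k) (isT : xpredT 1%g)) => s' _; apply. Qed.

Theorem proposition2p2 (m : nat) : (2 <= m)%N -> disc (4 * m + 2) 4 = 2%:R.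
Proof.
move=> m2; apply/le_anti/andP; split; last exact: disc_perm_ge2.
have [s le_s2] : exists s : 'S_(4 * m + 2), disc_perm 4 s <= 2%:R.
  by apply: exists_disc_perm_le2; lia.
exact: le_trans (disc_le _ s) le_s2.
Qed.
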